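(* Let $G$ be a graph and $c:V(G)\to\{0,1\}$ a coloring that is strongly maximal in some set $A'\subseteq V(G)$. If $A\supseteq A'$ is a set of vertices such that $A\setminus A'$ contains only finitely many vertices of finite degree, then $c$ is almost strongly maximal in $A$.
   Context: Graphs are simple, undirected, possibly infinite; degree of $v$ is $|N(v)|$. A coloring is a map $c:V(G)\to\{0,1\}$. $\mathit{trans}(c)=\{uv\in E(G):c(u)\neq c(v)\}$; $c*F$ is the coloring differing from $c$ exactly on $F$; for finite $F$ consisting of vertices of finite degree, $\mathit{dtrans}(c,F)=|\mathit{trans}(c)\setminus\mathit{trans}(c*F)|-|\mathit{trans}(c*F)\setminus\mathit{trans}(c)|$. $c$ is strongly maximal in $A$ if $\mathit{dtrans}(c,F)\ge0$ for every finite $F\subseteq A$ consisting of vertices of finite degree. Colorings $c,c'$ are close in $A$ if $c\triangle c'=\{v:c(v)\neq c'(v)\}$ is finite, consists only of vertices of finite degree, and is contained in $A$. $c$ is almost strongly maximal in $A$ if it is close in $A$ to a coloring that is strongly maximal in $A$. *)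

From HB Require Import structures.
From mathcomp Require Import all_boot all_order all_algebra.
From mathcomp Require Import boolp classical_sets cardinality.
Set Implicit Arguments. Unset Strict Implicit. Unset Printing Implicit Defensive.
Import Order.TTheory GRing.Theory Num.Theory.
Local Open Scope classical_set_scope.

(* An (undirected) edge uv is represented as the unordered pair [set u; v]. *)

Definition simple_graph (V : Type) (adj : V -> V -> Prop) : Prop :=
  (forall u v, adj u v -> adj v u) /\ (forall v, ~ adj v v).

Definition nbhd (V : Type) (adj : V -> V -> Prop) (v : V) : set V :=
  [set u | adj v u].

Definition fin_deg (V : Type) (adj : V -> V -> Prop) (v : V) : Prop :=
  finite_set (nbhd adj v).

Definition trans (V : Type) (adj : V -> V -> Prop) (c : V -> bool)
  : set (set V) :=
  [set e | exists u v, [/\ adj u v, e = [set u; v] & c u != c v]].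

(* c * F : the coloring differing from c exactly on F *)
Definition flip (V : Type) (c : V -> bool) (F : set V) : V -> bool :=
  fun v => if pselect (F v) then ~~ c v else c v.

(* the unique n with A in bijection with `I_n = {0,...,n-1}; 0 if A infinite *)
Definition ncard (T : Type) (A : set T) : nat :=
  xget 0%N [set n : nat | (A #= `I_n)%card].

(* dtrans(c,F) = |trans(c) \ trans(c*F)| - |trans(c*F) \ trans(c)|
   (meaningful for finite F consisting of vertices of finite degree) *)
Definition dtrans (V : Type) (adj : V -> V -> Prop) (c : V -> bool)
  (F : set V) : int :=
  ((ncard (trans adj c `\` trans adj (flip c F)))%:Z -
   (ncard (trans adj (flip c F) `\` trans adj c))%:Z)%R.

Definition strongly_maximal (V : Type) (adj : V -> V -> Prop)
  (c : V -> bool) (A : set V) : Prop :=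
  forall F : set V, finite_set F -> F `<=` A -> F `<=` fin_deg adj ->
    (0 <= dtrans adj c F)%R.

Definition diffset (V : Type) (c c' : V -> bool) : set V :=
  [set v | c v != c' v].

Definition close_in (V : Type) (adj : V -> V -> Prop)
  (c c' : V -> bool) (A : set V) : Prop :=
  [/\ finite_set (diffset c c'), diffset c c' `<=` fin_deg adj
    & diffset c c' `<=` A].

Definition almost_strongly_maximal (V : Type) (adj : V -> V -> Prop)
  (c : V -> bool) (A : set V) : Prop :=
  exists c' : V -> bool, close_in adj c c' A /\ strongly_maximal adj c' A.

From HB Require Import structures.
From mathcomp Require Import all_boot all_order all_algebra.
From mathcomp Require Import boolp classical_sets cardinality.
From mathcomp Require Import finmap.
From mathcomp Require Import zify.
Set Implicit Arguments. Unset Strict Implicit. Unset Printing Implicit Defensive.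
Local Open Scope classical_set_scope.

(* Flipping a finite set F of finite-degree vertices only changes transitions
   on the finitely many edges at F, so dtrans is additive along successive
   flips: dtrans(c, F (+) G) = dtrans(c, F) + dtrans(c * F, G).  Split a
   flippable F inside A into F /\ A', where dtrans is >= 0 by maximality, and
   F \ A', a subset of the finite set B of finite-degree vertices of A \ A';
   the second part costs at most the number of edges at B.  Hence dtrans(c, .)
   is bounded below on flippable subsets of A and attains its minimum at some
   F; by additivity, c * F is strongly maximal in A, and it is close to c. *)

Lemma ncard_fset (T : choiceType) (A : set T) : finite_set A ->
  ncard A = #|` fset_set A|%fset.
Proof.
by move=> fA; rewrite /ncard; move: (xgetPex 0%N fA) => /card_fset_set ->.
Qed.

Lemma ncardU (T : choiceType) (A B : set T) : finite_set A -> finite_set B ->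
  A `&` B = set0 -> ncard (A `|` B) = (ncard A + ncard B)%N.
Proof.
move=> fA fB AB0; have fAB : finite_set (A `|` B) by rewrite finite_setU.
rewrite !ncard_fset // fset_setU // cardfsU -fset_setI // AB0.
by rewrite fset_set0 cardfs0 subn0.
Qed.

Lemma ncard_le (T : choiceType) (A B : set T) : finite_set B -> A `<=` B ->
  (ncard A <= ncard B)%N.
Proof.
move=> fB AB; have fA : finite_set A by exact: sub_finite_set fB.
by rewrite !ncard_fset //; apply: fsubset_leq_card; rewrite -fset_set_sub.
Qed.

Lemma ncard_setD_diffE (T : choiceType) (X Y K : set T) : finite_set K ->
  X `\` Y `<=` K -> Y `\` X `<=` K ->
  ((ncard (X `\` Y))%:Z - (ncard (Y `\` X))%:Z =
   (ncard (X `&` K))%:Z - (ncard (Y `&` K))%:Z)%R.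
Proof.
move=> fK XYK YXK.
have fXY : finite_set (X `\` Y) by exact: sub_finite_set fK.
have fYX : finite_set (Y `\` X) by exact: sub_finite_set fK.
have fI : finite_set (X `&` Y `&` K) by apply: sub_finite_set fK => x [].
have splitIK (Z W : set T) : Z `\` W `<=` K ->
    Z `&` K = (Z `\` W) `|` (Z `&` W `&` K) /\
    (Z `\` W) `&` (Z `&` W `&` K) = set0.
  move=> ZWK; split; apply/seteqP; split => x //=.
  - by move=> [Zx Kx]; case: (pselect (W x)) => Wx; [right|left].
  - by move=> [[Zx Wx]|[[Zx _] Kx]]; split => //; apply: ZWK.
  - by move=> [[_ nWx] [[_ Wx] _]].
have [XK dX] := splitIK X Y XYK; have [YK dY] := splitIK Y X YXK.
rewrite (setIC Y X) in YK dY; rewrite XK YK !ncardU //.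
by rewrite !PoszD; lia.
Qed.

Lemma exists_argmin_int (T : Type) (P : T -> Prop) (f : T -> int) (M : int) :
  (exists x, P x) -> (forall x, P x -> (- M <= f x)%R) ->
  exists2 x, P x & forall y, P y -> (f x <= f y)%R.
Proof.
move=> [x0 Px0] lb.
pose Q n := `[< exists x, P x /\ (f x + M = n%:Z)%R >].
have exQ : exists n, Q n.
  have := lb x0 Px0; case e: (f x0 + M)%R => [n|n] lbx0; last by lia.
  by exists n; apply/asboolP; exists x0.
case: (ex_minnP exQ) => n /asboolP [x [Px ex]] nmin.
exists x => // y Py; have := lb y Py.
case e: (f y + M)%R => [m|m] lby; last by lia.
have /nmin : Q m by apply/asboolP; exists y.
by lia.
Qed.

Section Graph.
Variables (V : Type) (adj : V -> V -> Prop).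
Hypothesis adj_sym : forall u v, adj u v -> adj v u.

Definition edges_at (S : set V) : set (set V) :=
  [set e | exists u v, [/\ adj u v, e = [set u; v] & S u]].

Definition flippable (A F : set V) : Prop :=
  [/\ finite_set F, F `<=` A & F `<=` fin_deg adj].

Definition symd (F G : set V) : set V := (F `\` G) `|` (G `\` F).

Lemma edges_at_sub (S S' : set V) : S `<=` S' -> edges_at S `<=` edges_at S'.
Proof.
by move=> SS' e [u [v [uv -> Su]]]; exists u, v; split => //; apply: SS'.
Qed.

Lemma finite_edges_at (S : set V) : finite_set S -> S `<=` fin_deg adj ->
  finite_set (edges_at S).
Proof.
move=> fS Sfd.
apply: (@sub_finite_set _ _ (\bigcup_(u in S) ((fun v => [set u; v]) @` nbhd adj u))).
  by move=> e [u [v [uv -> Su]]]; exists u => //; exists v.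
by apply: bigcup_finite => // u Su; apply: finite_image; exact: Sfd.
Qed.

Lemma trans_setD_edges_at (S : set V) (d d' : V -> bool) :
  (forall x, ~ S x -> d x = d' x) -> trans adj d `\` trans adj d' `<=` edges_at S.
Proof.
move=> dd' e [[u [v [uv -> duv]]] not_d'].
case: (pselect (S u)) => Su; first by exists u, v.
case: (pselect (S v)) => Sv.
  by exists v, u; split => //; [apply: adj_sym | rewrite setUC].
by exfalso; apply: not_d'; exists u, v; split => //; rewrite -!dd'.
Qed.

Lemma flip_notin (d : V -> bool) (S : set V) x : ~ S x -> flip d S x = d x.
Proof. by move=> Sx; rewrite /flip; case: pselect. Qed.

Lemma diffset_flip (d : V -> bool) (F : set V) : diffset d (flip d F) = F.
Proof.
apply/seteqP; split => x; rewrite /diffset /flip /=;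
  by case: pselect => Fx //=; rewrite ?eqxx //; case: (d x).
Qed.

Lemma flip_symd (d : V -> bool) (F G : set V) :
  flip (flip d F) G = flip d (symd F G).
Proof.
apply: funext => x; rewrite /flip /symd.
by do 3 case: pselect => /=; rewrite ?negbK //; tauto.
Qed.

Lemma dtrans_edges_at (S : set V) (d : V -> bool) (K : set (set V)) :
  finite_set K -> edges_at S `<=` K ->
  dtrans adj d S = ((ncard (trans adj d `&` K))%:Z -
                    (ncard (trans adj (flip d S) `&` K))%:Z)%R.
Proof.
move=> fK SK; apply: ncard_setD_diffE => //; apply: subset_trans SK;
  by apply: trans_setD_edges_at => x Sx; rewrite flip_notin.
Qed.

Lemma dtrans_symd (d : V -> bool) (F G : set V) :
  finite_set F -> finite_set G -> F `<=` fin_deg adj -> G `<=` fin_deg adj ->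
  dtrans adj d (symd F G) = (dtrans adj d F + dtrans adj (flip d F) G)%R.
Proof.
move=> fF fG Ffd Gfd.
have FGfd : F `|` G `<=` fin_deg adj by move=> x [/Ffd|/Gfd].
have fK : finite_set (edges_at (F `|` G)).
  by apply: finite_edges_at => //; rewrite finite_setU.
rewrite (dtrans_edges_at _ fK); last by apply: edges_at_sub => x [[]|[]]; [left|right].
rewrite (dtrans_edges_at (S := F) _ fK); last by apply: edges_at_sub => x; left.
rewrite (dtrans_edges_at (S := G) _ fK); last by apply: edges_at_sub => x; right.
by rewrite flip_symd; lia.
Qed.

Lemma dtrans_ge_edges_at (c : V -> bool) (A' B F : set V) :
  strongly_maximal adj c A' -> finite_set B -> B `<=` fin_deg adj ->
  finite_set F -> F `<=` fin_deg adj -> F `\` A' `<=` B ->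
  (- (ncard (edges_at B))%:Z <= dtrans adj c F)%R.
Proof.
move=> maxc fB Bfd fF Ffd FB.
have fI : finite_set (F `&` A') by apply: sub_finite_set fF => x [].
have fD : finite_set (F `\` A') by apply: sub_finite_set fF => x [].
have -> : F = symd (F `&` A') (F `\` A').
  apply/seteqP; split => x; rewrite /symd /=; last by move=> [[[]]|[[]]].
  by move=> Fx; case: (pselect (A' x)) => A'x; [left|right]; split => // -[].
rewrite dtrans_symd //; [|by move=> x [/Ffd]..].
have I_ge0 : (0 <= dtrans adj c (F `&` A'))%R
  by apply: maxc => [//|x []|x [/Ffd]].
rewrite (dtrans_edges_at (S := F `\` A') _ (finite_edges_at fB Bfd));
  last exact: edges_at_sub.
set c' := flip (flip c (F `&` A')) (F `\` A').
have : (ncard (trans adj c' `&` edges_at B) <= ncard (edges_at B))%N :=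
  ncard_le (finite_edges_at fB Bfd) (@subIsetr _ _ _).
by lia.
Qed.

Lemma strongly_maximal_flip_argmin (c : V -> bool) (A F : set V) :
  flippable A F ->
  (forall G, flippable A G -> (dtrans adj c F <= dtrans adj c G)%R) ->
  strongly_maximal adj (flip c F) A.
Proof.
move=> [fF FA Ffd] Fmin G fG GA Gfd.
have FGmin : (dtrans adj c F <= dtrans adj c (symd F G))%R.
  apply: Fmin; split.
  - apply: (@sub_finite_set _ _ (F `|` G)); last by rewrite finite_setU.
    by move=> x [[]|[]]; [left|right].
  - by move=> x [[/FA]|[/GA]].
  - by move=> x [[/Ffd]|[/Gfd]].
by move: FGmin; rewrite dtrans_symd //; lia.
Qed.

Lemma close_in_flip (c : V -> bool) (A F : set V) :
  flippable A F -> close_in adj c (flip c F) A.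
Proof. by move=> [fF FA Ffd]; rewrite /close_in diffset_flip. Qed.

End Graph.

Theorem corollary2p4 (V : Type) (adj : V -> V -> Prop) (c : V -> bool)
  (A' A : set V) :
  simple_graph adj ->
  strongly_maximal adj c A' ->
  A' `<=` A ->
  finite_set ((A `\` A') `&` fin_deg adj) ->
  almost_strongly_maximal adj c A.
Proof.
move=> [adj_sym _] maxc _ fB.
set B := (A `\` A') `&` fin_deg adj in fB.
have Bfd : B `<=` fin_deg adj by move=> x [].
have flippable0 : exists F, flippable adj A F.
  by exists set0; split; [exact: finite_set0 | exact: sub0set | exact: sub0set].
have dtrans_lb F : flippable adj A F ->
    (- (ncard (edges_at adj B))%:Z <= dtrans adj c F)%R.
  move=> [fF FA Ffd]; apply: (dtrans_ge_edges_at adj_sym maxc fB Bfd fF Ffd).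
  by move=> x [Fx A'x]; split; [split=> //; apply: FA | apply: Ffd].
have [F FA Fmin] :=
  exists_argmin_int (M := (ncard (edges_at adj B))%:Z) flippable0 dtrans_lb.
exists (flip c F); split; first exact: close_in_flip FA.
exact: strongly_maximal_flip_argmin FA Fmin.
Qed.
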